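(* Let $G$ be a $K_4$-free circular-arc graph with $n = |V(G)| \geq 2$ vertices. Then $G$ has at most $2n$ edges.
   Context: A circular-arc graph is the intersection graph of a finite family of arcs of a circle. A graph is $K_4$-free if it contains no complete subgraph on $4$ vertices. *)

From mathcomp Require Import all_boot.
From Stdlib Require Import Reals ZArith.
Set Implicit Arguments. Unset Strict Implicit. Unset Printing Implicit Defensive.

(* The circle is R/Z, represented by Z-periodic subsets of R.
   A closed arc with start point [a] and (nonnegative) length [l] is the set of
   points x of the circle such that x + k lies in [a, a + l] for some integer k.
   (Length >= 1 gives the whole circle.) *)
Definition on_arc (a l x : R) : Prop :=
  exists k : Z, (a <= x + IZR k)%R /\ (x + IZR k <= a + l)%R.

Definition arcs_meet (a1 l1 a2 l2 : R) : Prop :=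
  exists x : R, on_arc a1 l1 x /\ on_arc a2 l2 x.

Definition simple_graph (T : finType) (e : rel T) : Prop :=
  symmetric e /\ irreflexive e.

Definition circular_arc_graph (T : finType) (e : rel T) : Prop :=
  exists (a l : T -> R), (forall v, (0 <= l v)%R) /\
    forall u v : T, u != v -> (e u v <-> arcs_meet (a u) (l u) (a v) (l v)).

Definition K4_free (T : finType) (e : rel T) : Prop :=
  ~ exists S : {set T}, #|S| = 4 /\
      forall u v, u \in S -> v \in S -> u != v -> e u v.

Definition edge_set (T : finType) (e : rel T) : {set {set T}} :=
  [set E : {set T} | [exists u, exists v, e u v && (E == [set u; v])]].

From mathcomp Require Import all_boot.
From Stdlib Require Import Reals Lra ZArith ClassicalDescription.

Set Implicit Arguments.
Unset Strict Implicit.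
Unset Printing Implicit Defensive.

(* Whenever two arcs meet, the start point of one of them lies on the other;
   charge the edge to the vertex whose start point is covered.  The arcs
   through the start point of u pairwise meet, so u and the neighbours charged
   to it form a clique, which in a K4-free graph leaves at most 2 of them. *)

Lemma on_arc_start (a l : R) : (0 <= l)%R -> on_arc a l a.
Proof. by move=> l_ge0; exists 0%Z; rewrite /=; split; lra. Qed.

Lemma arcs_meet_start (a1 l1 a2 l2 : R) :
  arcs_meet a1 l1 a2 l2 -> on_arc a2 l2 a1 \/ on_arc a1 l1 a2.
Proof.
move=> [x [[k1 [x_ge1 x_le1]] [k2 [x_ge2 x_le2]]]].
case: (Rle_dec a2 (a1 + IZR k2 - IZR k1)) => [a2_le | /Rnot_le_lt a1_lt].
- by left; exists (k2 - k1)%Z; rewrite minus_IZR; split; lra.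
- by right; exists (k1 - k2)%Z; rewrite minus_IZR; split; lra.
Qed.

Lemma K4_free_clique_card (T : finType) (e : rel T) (S : {set T}) :
  K4_free e -> {in S &, forall u v, u != v -> e u v} -> #|S| <= 3.
Proof.
move=> K4free cliqueS; rewrite leqNgt; apply/negP => /card_geqP [s [uniq_s size_s sS]].
apply: K4free; exists [set x in s]; split.
  by rewrite cardsE (card_uniqP uniq_s).
by move=> u v; rewrite !inE => /sS uS /sS vS; exact: cliqueS.
Qed.

Lemma leq_card_bigcup (T I : finType) (F : I -> {set T}) :
  #|\bigcup_(i : I) F i| <= \sum_(i : I) #|F i|.
Proof.
elim/big_rec2: _ => [|i n U _ le_U_n]; first by rewrite cards0.
exact: leq_trans (leq_card_setU _ _) (leq_add _ le_U_n).
Qed.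

Lemma card_edge_set_orient (T : finType) (e d : rel T) (k : nat) :
  symmetric e -> (forall u v, e u v -> d u v || d v u) ->
  (forall u, #|[set v | e u v & d u v]| <= k) ->
  #|edge_set e| <= k * #|T|.
Proof.
move=> e_sym orient charged_le.
pose F u := [set [set u; v] | v in [set v | e u v & d u v]].
have sub_F : edge_set e \subset \bigcup_(u : T) F u.
  apply/subsetP => E; rewrite inE => /existsP [u /existsP [v /andP [euv /eqP ->]]].
  case/orP: (orient u v euv) => [duv | dvu]; apply/bigcupP.
    by exists u => //; apply/imsetP; exists v => //; rewrite inE euv duv.
  by exists v => //; apply/imsetP; exists u; [rewrite inE e_sym euv dvu | exact: setUC].
apply: leq_trans (subset_leq_card sub_F) _.
apply: leq_trans (leq_card_bigcup F) _.
rewrite -sum1_card big_distrr /=; apply: leq_sum => u _; rewrite muln1.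
exact: leq_trans (leq_imset_card _ _) (charged_le u).
Qed.

Theorem lemma2 (T : finType) (e : rel T) :
  simple_graph e -> circular_arc_graph e -> K4_free e -> 2 <= #|T| ->
  #|edge_set e| <= 2 * #|T|.
Proof.
move=> [e_sym e_irr] [a [l [l_ge0 e_meet]]] K4free _.
pose d u v : bool := excluded_middle_informative (on_arc (a v) (l v) (a u)).
apply: (card_edge_set_orient (d := d) e_sym).
  move=> u v euv; have u_neq_v : u != v by apply: contraTneq euv => ->; rewrite e_irr.
  by case: (arcs_meet_start ((e_meet u v u_neq_v).1 euv)) => start_on;
    apply/orP; [left | right]; apply/sumboolP.
move=> u; set N := [set v | e u v & d u v].
have u_notin_N : u \notin N by rewrite inE e_irr.
have through_start v : v \in u |: N -> on_arc (a v) (l v) (a u).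
  case/setU1P => [-> | ]; first exact: on_arc_start.
  by rewrite inE => /andP [_ /sumboolP].
have : #|u |: N| <= 3.
  apply: (K4_free_clique_card K4free) => v w vN wN v_neq_w.
  by apply/(e_meet v w v_neq_w); exists (a u); split; apply: through_start.
by rewrite cardsU1 u_notin_N.
Qed.
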